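(* Let $\omega>0$ and, for $\tau>0$, set $\sigma=\omega\sqrt\tau$. Let $w:\mathbb{R}\to\mathbb{R}$ be continuous with $0<L\le w(x)\le U$ for all $x\in\mathbb{R}$ for some constants $L,U$, and let $w$ be twice differentiable on $\mathbb{R}$ with $|w''(x)|<M$ for some $M$ and all $x\in\mathbb{R}$. Define, for $x_1,x_2\in\mathbb{R}$ and $\tau>0$, $$v(x_1,x_2;\tau)=\frac{\int_{\mathbb{R}}k_{\sqrt2\sigma}(y;x_2)\,w(y)\,\mathrm{d}y}{\int_{\mathbb{R}}k_{\sigma}(y;x_2)\,w(y)\,\mathrm{d}y}\int_{\mathbb{R}}k_{\sigma/\sqrt2}\Bigl(z;\tfrac12(x_1+x_2)\Bigr)\frac{w(z)}{\int_{\mathbb{R}}k_\sigma(y;z)\,w(y)\,\mathrm{d}y}\,\mathrm{d}z,$$ where $k_s(\cdot;x)$ denotes the Gaussian density with mean $x$ and standard deviation $s$. Let $\tau_0=\frac{2L}{M\omega^2}$. Then there is a constant $C>0$ such that $|v(x_1,x_2;\tau)-1|\le C\tau$ for all $x_1,x_2\in\mathbb{R}$ and all $\tau\in(0,\tau_0)$.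
   Context: The function $v$ is the ratio of the two-step transition density of a one-dimensional random walk with Gaussian kernel of standard deviation $\sigma$ and weighting function $w$ to the one-step density of the same model with standard deviation $\sqrt2\sigma$. *)

From HB Require Import structures.
From mathcomp Require Import all_boot all_order all_algebra.
From mathcomp Require Import all_classical all_reals all_analysis.
Set Implicit Arguments. Unset Strict Implicit. Unset Printing Implicit Defensive.
Import Order.TTheory GRing.Theory Num.Theory.
Import numFieldNormedType.Exports.
Local Open Scope classical_set_scope.
Local Open Scope ring_scope.

Definition gk {R : realType} (s x y : R) : R := normal_pdf x s y.

Definition kint {R : realType} (w : R -> R) (s x : R) : R :=
  Rintegral (@lebesgue_measure R) setT (fun y => gk s x y * w y).

Definition vfun {R : realType} (w : R -> R) (sigma x1 x2 : R) : R :=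
  kint w (Num.sqrt 2 * sigma) x2 / kint w sigma x2 *
  Rintegral (@lebesgue_measure R) setT
    (fun z => gk (sigma / Num.sqrt 2) ((x1 + x2) / 2) z * (w z / kint w sigma z)).

From HB Require Import structures.
From mathcomp Require Import all_boot all_order all_algebra.
From mathcomp Require Import all_classical all_reals all_analysis.
From mathcomp Require Import ring lra measurable_realfun.
Import Order.TTheory GRing.Theory Num.Theory.
Import numFieldNormedType.Exports.
Local Open Scope classical_set_scope.
Local Open Scope ring_scope.

(* Gaussian smoothing moves a function with [|w''| <= M] by at most [16 M s^2]
   uniformly: expanding [w] to first order around the mean, the linear term
   integrates to zero by symmetry and the remainder is at most [M (y - x)^2],
   whose Gaussian average is controlled by [(y - x)^2 k_s <= 16 s^2 k_(2 s)].
   Hence both integrals in the prefactor of [v] are [w x2 + O(sigma^2)] and,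
   being at least [L], have ratio [1 + O(sigma^2)]; the inner integrand
   [w z / \int k_sigma(y; z) w(y) dy] lies in [[0, U/L]] and is
   [1 + O(sigma^2)], hence so is its Gaussian average; finally
   [sigma^2 = omega^2 tau]. *)

Section real_functions.
Context {R : realType}.

(* The two conditions on [c] say that [c] lies between [a] and [b]. *)
Lemma norm_sub_le_derive_bound (f df : R -> R) (K a b : R) :
  (forall x : R, is_derive x 1 f (df x)) ->
  (forall c, `|c - a| <= `|b - a| -> `|b - c| <= `|b - a| -> `|df c| <= K) ->
  `|f b - f a| <= K * `|b - a|.
Proof.
wlog ab : a b / a <= b => [wlog_ab fd dfK|fd dfK].
  have [ab|/ltW ba] := leP a b; first exact: wlog_ab.
  rewrite distrC (distrC b); apply: wlog_ab => // c cb ac.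
  by apply: dfK; rewrite distrC // (distrC b).
have fc x : {for x, continuous f}.
  by apply/differentiable_continuous/derivable1_diffP; case: (fd x).
have [c /[!in_itv]/= /andP[ac cb] ->] :=
  MVT_segment ab (fun x _ => fd x) (continuous_subspaceT fc).
rewrite normrM [`|b - a|]ger0_norm ?subr_ge0 // ler_wpM2r ?subr_ge0 //.
apply: dfK; rewrite !ger0_norm ?subr_ge0 ?(ltW ac) ?(ltW cb) //; lra.
Qed.

Lemma taylor1_remainder_le (w : R -> R) (M x y : R) :
  (forall x, derivable w x 1) -> (forall x, derivable (derive1 w) x 1) ->
  (forall x, `|derive1n 2 w x| <= M) ->
  `|w y - w x - derive1 w x * (y - x)| <= M * (y - x) ^+ 2.
Proof.
move=> dw dw' w''M.
have w''E (c : R) : is_derive c 1 (derive1 w) (derive1n 2 w c).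
  by rewrite /derive1n /= derive1E; exact: derivableP.
have w'_lip c : `|derive1 w c - derive1 w x| <= M * `|c - x|.
  exact: norm_sub_le_derive_bound w''E (fun c _ _ => w''M c).
have remE (c : R) : is_derive c 1 (w - derive1 w x \*: id)
                                ('D_1 w c - derive1 w x *: 1).
  by apply: is_deriveB; exact: derivableP.
have := norm_sub_le_derive_bound _ _ (M * `|y - x|) x y remE.
rewrite -mulrA -expr2 real_normK ?num_real // !fctE /GRing.scale /=.
have -> : w y - derive1 w x * y - (w x - derive1 w x * x) =
          w y - w x - derive1 w x * (y - x) by ring.
apply => c cx _; rewrite -derive1E mulr1; apply: le_trans (w'_lip c) _.
by rewrite ler_wpM2l // (le_trans (normr_ge0 _) (w''M 0)).
Qed.

Lemma measurable_fun_derivable (f : R -> R) :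
  (forall x, derivable f x 1) -> measurable_fun setT f.
Proof.
move=> df; apply: continuous_measurable_fun => x.
exact/differentiable_continuous/derivable1_diffP/df.
Qed.

Lemma measurable_funV_gt0 d (T : measurableType d) (f : T -> R) :
  measurable_fun setT f -> (forall x, 0 < f x) ->
  measurable_fun setT (fun x => (f x)^-1).
Proof.
move=> mf f0; apply: (eq_measurable_fun (expR \o (-%R \o (@ln R \o f)))).
  by move=> x _; rewrite /= expRN lnK // posrE.
apply: measurableT_comp; first exact: measurable_expR.
by apply: measurableT_comp => //; apply: measurableT_comp.
Qed.

End real_functions.

Lemma norm_div_sub1_le {R : realFieldType} (a b e l : R) : 0 < l -> l <= a ->
  `|b - a| <= e -> `|b / a - 1| <= e / l.
Proof.
move=> l0 la ba; have a0 := lt_le_trans l0 la.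
rewrite ler_pdivlMr // (le_trans _ ba) //.
have -> : b - a = (b / a - 1) * a by field; rewrite gt_eqF.
by rewrite normrM (gtr0_norm a0) ler_wpM2l.
Qed.

Lemma norm_mul_sub1_le {R : realDomainType} (r t a b c : R) :
  `|r - 1| <= a -> `|t| <= b -> `|t - 1| <= c -> `|r * t - 1| <= a * b + c.
Proof.
move=> ra tb tc; have -> : r * t - 1 = (r - 1) * t + (t - 1) by ring.
by rewrite (le_trans (ler_normD _ _)) // normrM lerD // ler_pM.
Qed.

Section gauss_kernel.
Context {R : realType}.
Local Notation mu := (@lebesgue_measure R).

Lemma gkE (s x y : R) : 0 < s ->
  gk s x y = normal_peak s * expR (- (y - x) ^+ 2 / (s ^+ 2 *+ 2)).
Proof. by move=> s0; rewrite /gk normal_pdfE ?gt_eqF. Qed.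

Lemma gk_ge0 (s x y : R) : 0 <= gk s x y.
Proof. exact: normal_pdf_ge0. Qed.

Lemma measurable_gk (s x : R) : measurable_fun setT (gk s x).
Proof. exact: measurable_normal_pdf. Qed.

Lemma integrable_gk (s x : R) : mu.-integrable setT (EFin \o gk s x).
Proof. exact: integrable_normal_pdf. Qed.

Lemma Rintegral_gk (s x : R) : Rintegral mu setT (gk s x) = 1.
Proof. by rewrite /Rintegral /gk integral_normal_pdf. Qed.

Lemma normal_peak_double (s : R) : 0 < s -> normal_peak s = 2 * normal_peak (2 * s).
Proof.
move=> s0; rewrite /normal_peak.
have -> : (2 * s) ^+ 2 * pi *+ 2 = 2 ^+ 2 * (s ^+ 2 * pi *+ 2) by ring.
by rewrite sqrtrM ?sqr_ge0 // sqrtr_sqr ger0_norm // invfM mulrA divff ?mul1r.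
Qed.

(* With [q = (y - x)^2 / (8 s^2)] this reduces to [q exp (- 3 q) <= 1]. *)
Lemma sqr_dist_gk_le (s x y : R) : 0 < s ->
  (y - x) ^+ 2 * gk s x y <= 16 * s ^+ 2 * gk (2 * s) x y.
Proof.
move=> s0; rewrite !gkE ?mulr_gt0 // (normal_peak_double _ s0).
have p0 := normal_peak_ge0 (2 * s); have ss : 0 < s ^+ 2 by rewrite exprn_gt0.
set p := normal_peak _; set q := (y - x) ^+ 2 / (8 * s ^+ 2).
have q0 : 0 <= q by rewrite divr_ge0 ?sqr_ge0 // mulr_ge0 // ltW.
have -> : - (y - x) ^+ 2 / (s ^+ 2 *+ 2) = - q + - (3 * q).
  by rewrite /q; field; rewrite gt_eqF.
have -> : - (y - x) ^+ 2 / ((2 * s) ^+ 2 *+ 2) = - q.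
  by rewrite /q; field; rewrite gt_eqF.
have -> : (y - x) ^+ 2 = 8 * s ^+ 2 * q by rewrite /q; field; rewrite gt_eqF.
have qexp : q * expR (- (3 * q)) <= 1.
  rewrite expRN ler_pdivrMr ?expR_gt0 // mul1r.
  by apply: le_trans (expR_ge1Dx _); lra.
have e0 := expR_ge0 (- q); rewrite expRD.
have : 0 <= 16 * s ^+ 2 * (p * expR (- q)) by rewrite !mulr_ge0 // ltW.
nra.
Qed.

Lemma integrable_gkM (s x a b : R) (h : R -> R) : 0 < s -> 0 <= b ->
  measurable_fun setT h -> (forall y, `|h y| <= a + b * (y - x) ^+ 2) ->
  mu.-integrable setT (EFin \o (fun y => gk s x y * h y)).
Proof.
move=> s0 b0 mh hb.
apply: (le_integrable _ _ _ (integrableD _ (integrableZl _ a (integrable_gk s x))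
   (integrableZl _ (16 * b * s ^+ 2) (integrable_gk (2 * s) x)))) => //.
  by apply/measurable_EFinP; apply: measurable_funM => //; exact: measurable_gk.
move=> y _; rewrite /comp /= lee_fin (le_trans _ (ler_norm _)) //.
rewrite normrM (ger0_norm (gk_ge0 _ _ _)).
have := sqr_dist_gk_le s x y s0; have := gk_ge0 s x y; have := hb y.
move: (gk s x y) (gk (2 * s) x y) ((y - x) ^+ 2) `|h y| => g g2 t hy hyb g0 H.
nra.
Qed.

Lemma half_moment_gk (s c : R) : 0 < s ->
  Rintegral mu `[c, +oo[ (fun y => gk s c y * (y - c)) = s ^+ 2 * normal_peak s.
Proof.
move=> s0; set p := normal_peak s; set k := s ^+ 2 *+ 2.
have k0 : 0 < k by rewrite pmulrn_lgt0 // exprn_gt0.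
pose f y := p * expR (- (y - c) ^+ 2 / k) * (y - c).
pose F y := - s ^+ 2 * (p * expR (- (y - c) ^+ 2 / k)).
have dF (y : R) : is_derive y 1 F (f y).
  by apply: is_derive_eq; rewrite /f /k /GRing.scale /=; field; rewrite gt_eqF.
have cF : continuous F.
  by move=> y; apply/differentiable_continuous/derivable1_diffP; case: (dF y).
have cf : continuous f.
  by move=> y; apply/differentiable_continuous/derivable1_diffP; apply: ex_derive.
have Fy : F y @[y --> +oo] --> 0.
  set r := Num.sqrt k; have r0 : 0 < r by rewrite sqrtr_gt0.
  have -> : F = fun y => - s ^+ 2 * p * gauss_fun ((y - c) / r).
    apply/funext => y; rewrite /F /gauss_fun expr_div_n sqr_sqrtr ?(ltW k0) //.
    by rewrite mulNr mulrA.
  rewrite -(mulr0 (- s ^+ 2 * p)); apply: cvgM; first exact: cvg_cst.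
  apply: cvg_comp (@cvg_gauss_fun R).
  by apply: gt0_cvgMly; [rewrite invr_gt0|exact: cvg_addrr].
transitivity (Rintegral mu `[c, +oo[ f).
  by apply: eq_Rintegral => y _; rewrite gkE.
rewrite (@Rintegral_ge0_continuous_FTC2y R f F c 0) //.
- by rewrite /F subrr expr0n /= oppr0 mul0r expR0 mulr1 sub0r mulNr opprK.
- move=> y cy; rewrite /f !mulr_ge0 ?expR_ge0 ?subr_ge0 //; exact: normal_peak_ge0.
- exact: continuous_subspaceT.
- exact/cvg_at_right_filter/cF.
- by move=> y _; rewrite derive1E; exact: derive_val.
Qed.

Lemma gk_oppr (s x y : R) : 0 < s -> gk s x (- y) = gk s (- x) y.
Proof. by move=> s0; rewrite !gkE // -opprD sqrrN opprK. Qed.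

Lemma normr_le1Dsqr (t : R) : `|t| <= 1 + t ^+ 2.
Proof. by case: (lerP 0 t) => t0; [rewrite ger0_norm|rewrite ltr0_norm]; nra. Qed.

(* Both halves around [x] contribute [s^2 normal_peak s], the left one after
   reflection [y |-> - y]. *)
Lemma Rintegral_gk_center (s x : R) : 0 < s ->
  Rintegral mu setT (fun y => gk s x y * (y - x)) = 0.
Proof.
move=> s0; set h := fun y => gk s x y * (y - x).
set g := fun y => gk s x y * (x - y).
have ih : mu.-integrable setT (EFin \o h).
  apply: (@integrable_gkM s x 1 1) => // [|y]; first exact: measurable_funB.
  by rewrite mul1r normr_le1Dsqr.
have ig : mu.-integrable setT (EFin \o g).
  apply: (@integrable_gkM s x 1 1) => // [|y]; first exact: measurable_funB.
  by rewrite mul1r distrC normr_le1Dsqr.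
have TE : [set: R] = `[x, +oo[ `|` `]-oo, x[.
  apply/seteqP; split => y //= _; rewrite !in_itv /= andbT.
  by case: (leP x y); [left|right].
have xx : [disjoint `[x, +oo[ & `]-oo, x[].
  rewrite disj_set2E; apply/eqP/seteqP; split => y //= [].
  by rewrite !in_itv /= andbT => /le_lt_trans/[apply]; rewrite ltxx.
rewrite TE Rintegral_setU // -?TE // half_moment_gk //.
rewrite Rintegral_itv_bndo_bndc; last exact: integrableS ih.
have -> : Rintegral mu `]-oo, x] h = - 1 * Rintegral mu `]-oo, x] g.
  rewrite -RintegralZl //; last exact: integrableS ig.
  by apply: eq_Rintegral => y _; rewrite /h /g mulN1r -mulrN opprB.
have -> : Rintegral mu `]-oo, x] g =
          Rintegral mu `[- x, +oo[ (fun y => gk s (- x) y * (y - - x)).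
  have := @ge0_integration_by_substitutionNy R g (- x); rewrite opprK => sub.
  rewrite /Rintegral sub; first (congr fine; apply: eq_integral => y _).
  - by rewrite /g /= gk_oppr // opprK addrC.
  - apply: continuous_subspaceT => y; apply: continuousM.
      exact: continuous_normal_pdf (lt0r_neq0 s0) y.
    by apply: cvgB; [exact: cvg_cst|exact: cvg_id].
  - by move=> y /[!in_itv]/= yx; rewrite /g mulr_ge0 ?gk_ge0 // subr_ge0 ltW.
by rewrite half_moment_gk // mulN1r subrr.
Qed.

End gauss_kernel.

Section gauss_average.
Context {R : realType}.
Local Notation mu := (@lebesgue_measure R).

Lemma kint_cst (s x c : R) : kint (fun=> c) s x = c.
Proof. by rewrite /kint RintegralZr ?Rintegral_gk ?mul1r //; exact: integrable_gk. Qed.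

Lemma ler_norm_kint (s x a b : R) (h g : R -> R) : 0 < s -> 0 <= b ->
  measurable_fun setT h -> measurable_fun setT g ->
  (forall y, `|h y| <= g y) -> (forall y, g y <= a + b * (y - x) ^+ 2) ->
  `|kint h s x| <= kint g s x.
Proof.
move=> s0 b0 mh mg hg ga.
have g_quad y : `|g y| <= a + b * (y - x) ^+ 2.
  by rewrite ger0_norm ?ga // (le_trans _ (hg y)).
apply: le_trans (le_normr_Rintegral _ _) _ => //.
  by apply: (@integrable_gkM _ s x a b) => // y; exact: le_trans (hg y) (ga y).
apply: le_Rintegral => //.
- have ih : mu.-integrable setT (EFin \o (fun y => gk s x y * `|h y|)).
    apply: (@integrable_gkM _ s x a b) => //; first exact: measurableT_comp.
    by move=> y; rewrite normr_id (le_trans (hg y)).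
  apply: (eq_integrable _ _ _ _ ih) => // y _.
  by rewrite /= normrM ger0_norm ?gk_ge0.
- exact: (@integrable_gkM _ s x a b).
- by move=> y _; rewrite normrM ger0_norm ?gk_ge0 // ler_wpM2l ?gk_ge0.
Qed.

Lemma norm_kint_sub_le (s x c e : R) (h : R -> R) : 0 < s ->
  measurable_fun setT h -> (forall y, `|h y - c| <= e) -> `|kint h s x - c| <= e.
Proof.
move=> s0 mh hce.
have e0 : 0 <= e := le_trans (normr_ge0 _) (hce 0).
have h_bnd y : `|h y| <= `|c| + e + 0 * (y - x) ^+ 2.
  rewrite mul0r addr0 -[h y](subrK c) (le_trans (ler_normD _ _)) //.
  by rewrite addrC lerD2l.
have -> : kint h s x - c = kint (fun y => h y - c) s x.
  rewrite -[c in LHS](kint_cst s x) /kint -RintegralB //.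
  - by apply: eq_Rintegral => y _; rewrite mulrBr.
  - exact: (@integrable_gkM _ s x (`|c| + e) 0).
  - apply: (@integrable_gkM _ s x `|c| 0) => // y.
    by rewrite mul0r addr0.
rewrite -[e in X in _ <= X](kint_cst s x).
apply: (@ler_norm_kint s x e 0) => // y.
- exact: measurable_funB.
- by rewrite mul0r addr0.
Qed.

Lemma kint_itv (s x l u : R) (h : R -> R) : 0 < s ->
  measurable_fun setT h -> (forall y, l <= h y <= u) -> l <= kint h s x <= u.
Proof.
move=> s0 mh hlu.
have := @norm_kint_sub_le s x ((l + u) / 2) ((u - l) / 2) h s0 mh.
have hmid y : `|h y - (l + u) / 2| <= (u - l) / 2.
  by have /andP[] := hlu y; rewrite ler_norml => ? ?; apply/andP; split; lra.
by move=> /(_ hmid); rewrite ler_norml => /andP[] ? ?; apply/andP; split; lra.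
Qed.

Lemma norm_kint_le_sqr (s x M : R) (h : R -> R) : 0 < s -> 0 <= M ->
  measurable_fun setT h -> (forall y, `|h y| <= M * (y - x) ^+ 2) ->
  `|kint h s x| <= 16 * M * s ^+ 2.
Proof.
move=> s0 M0 mh hM.
have mq : measurable_fun setT (fun y : R => M * (y - x) ^+ 2).
  by apply: measurable_funM => //; apply: measurable_funX; exact: measurable_funB.
apply: le_trans (@ler_norm_kint s x 0 M h _ s0 M0 mh mq hM _) _.
  by move=> y; rewrite add0r.
have i2 : mu.-integrable setT (EFin \o (fun y => 16 * M * s ^+ 2 * gk (2 * s) x y)).
  exact: (eq_integrable _ _ _ _ (integrableZl _ (16 * M * s ^+ 2) (integrable_gk (2 * s) x))).
have -> : 16 * M * s ^+ 2 = Rintegral mu setT (fun y => 16 * M * s ^+ 2 * gk (2 * s) x y).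
  by rewrite RintegralZl ?Rintegral_gk ?mulr1 //; exact: integrable_gk.
apply: le_Rintegral => //.
- apply: (@integrable_gkM _ s x 0 M) => // y.
  by rewrite add0r ger0_norm // mulr_ge0 ?sqr_ge0.
- move=> y _; rewrite mulrCA (mulrC 16) -!mulrA ler_wpM2l //.
  by rewrite mulrC !mulrA -(mulrA 16) -expr2 sqr_dist_gk_le.
Qed.

Lemma measurable_kint (w : R -> R) (s : R) : 0 < s ->
  measurable_fun setT w -> (forall y, 0 <= w y) -> measurable_fun setT (kint w s).
Proof.
move=> s0 mw w0.
pose f (p : R * R) := (gk s 0 (p.2 - p.1) * w p.2)%:E.
have mf : measurable_fun setT f.
  apply/measurable_EFinP; apply: measurable_funM; last exact: measurableT_comp.
  apply: measurableT_comp; first exact: measurable_gk.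
  by apply: measurable_funB; [exact: measurable_snd|exact: measurable_fst].
have f0 p : (0 <= f p)%E by rewrite lee_fin mulr_ge0 ?gk_ge0.
have /(measurableT_comp (@fine_measurable R setT measurableT)) :=
  @measurable_fun_fubini_tonelli_F _ _ R _ R mu f mf f0.
apply: eq_measurable_fun => x _.
rewrite /kint /Rintegral /fubini_F /=; congr fine; apply: eq_integral => y _.
by rewrite /f /= !gkE // subr0.
Qed.

Lemma dist_kint_le (w : R -> R) (s x M : R) : 0 < s ->
  (forall x, derivable w x 1) -> (forall x, derivable (derive1 w) x 1) ->
  (forall x, `|derive1n 2 w x| <= M) ->
  `|kint w s x - w x| <= 16 * M * s ^+ 2.
Proof.
move=> s0 dw dw' w''M.
have M0 : 0 <= M := le_trans (normr_ge0 _) (w''M 0).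
have mw := measurable_fun_derivable _ dw.
have mlin : measurable_fun setT (fun y : R => y - x) by exact: measurable_funB.
set d := derive1 w x; set rem := fun y => w y - w x - d * (y - x).
have rem_le y : `|rem y| <= M * (y - x) ^+ 2 by exact: taylor1_remainder_le.
have mrem : measurable_fun setT rem.
  by apply: measurable_funB; [exact: measurable_funB|exact: measurable_funM].
have lin_le y : `|d * (y - x)| <= `|d| + `|d| * (y - x) ^+ 2.
  have := ler_wpM2l (normr_ge0 d) (normr_le1Dsqr (y - x)).
  by rewrite normrM mulrDr mulr1.
have w_le y : `|w y| <= `|w x| + `|d| + (`|d| + M) * (y - x) ^+ 2.
  have -> : w y = rem y + (w x + d * (y - x)) by rewrite /rem; ring.
  have := ler_normD (rem y) (w x + d * (y - x)).
  have := ler_normD (w x) (d * (y - x)).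
  have := rem_le y; have := lin_le y; lra.
have -> : kint w s x - w x = kint rem s x + kint (fun y => d * (y - x)) s x.
  rewrite -[w x in LHS](kint_cst s x) /kint -RintegralB // -?RintegralD //.
  - by apply: eq_Rintegral => y _; rewrite /rem; ring.
  - by apply: (@integrable_gkM _ s x 0 M) => // y; rewrite add0r.
  - by apply: (@integrable_gkM _ s x `|d| `|d|) => //; exact: measurable_funM.
  - exact: (@integrable_gkM _ s x _ _ _ s0 (addr_ge0 (normr_ge0 d) M0) mw w_le).
  - by apply: (@integrable_gkM _ s x `|w x| 0) => // y; rewrite mul0r addr0.
have -> : kint (fun y => d * (y - x)) s x = 0.
  rewrite /kint -(mulr0 d) -(Rintegral_gk_center s x s0) -RintegralZl //.
    by apply: eq_Rintegral => y _; ring.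
  by apply: (@integrable_gkM _ s x 1 1) => // y; rewrite mul1r normr_le1Dsqr.
by rewrite addr0; exact: norm_kint_le_sqr.
Qed.

End gauss_average.

Lemma vfun_sub1_le {R : realType} (w : R -> R) (l u M s x1 x2 : R) :
  0 < s -> 0 < l -> (forall x, l <= w x <= u) ->
  (forall x, derivable w x 1) -> (forall x, derivable (derive1 w) x 1) ->
  (forall x, `|derive1n 2 w x| <= M) ->
  `|vfun w s x1 x2 - 1| <= 16 * M * (3 * u / l + 1) / l * s ^+ 2.
Proof.
move=> s0 l0 wlu dw dw' w''M.
have M0 : 0 <= M := le_trans (normr_ge0 _) (w''M 0).
have mw := measurable_fun_derivable _ dw.
set A := kint w s.
have Al z : l <= A z by case/andP: (@kint_itv _ s z l u w s0 mw wlu).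
have A0 z : 0 < A z := lt_le_trans l0 (Al z).
have Aw z : `|A z - w z| <= 16 * M * s ^+ 2 by exact: dist_kint_le.
set r := kint w (Num.sqrt 2 * s) x2 / A x2.
have r_le : `|r - 1| <= 48 * M * s ^+ 2 / l.
  apply: norm_div_sub1_le (Al x2) _ => //.
  have := @dist_kint_le _ w (Num.sqrt 2 * s) x2 M.
  rewrite exprMn sqr_sqrtr // mulr_gt0 ?sqrtr_gt0 // => /(_ isT dw dw' w''M).
  have := Aw x2; have := ler_distD (w x2) (kint w (Num.sqrt 2 * s) x2) (A x2).
  rewrite (distrC (w x2)); lra.
set h := fun z => w z / A z.
have mh : measurable_fun setT h.
  apply: measurable_funM => //; apply: measurable_funV_gt0 A0.
  by apply: measurable_kint => // y; case/andP: (wlu y) => /(le_trans (ltW l0)).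
have h_le z : `|h z - 1| <= 16 * M * s ^+ 2 / l.
  by apply: norm_div_sub1_le (Al z) _; rewrite // distrC.
have h_itv z : 0 <= h z <= u / l.
  have /andP[lw wu] := wlu z; have w0 := le_trans (ltW l0) lw.
  rewrite divr_ge0 ?(ltW (A0 z)) //= ler_pdivrMr // mulrAC ler_pdivlMr //.
  by rewrite ler_pM ?(ltW l0).
have s'0 : 0 < s / Num.sqrt 2 by rewrite divr_gt0 ?sqrtr_gt0.
set I := kint h (s / Num.sqrt 2) ((x1 + x2) / 2).
have I_le : `|I| <= u / l.
  have /andP[I0 Iu] := @kint_itv _ _ ((x1 + x2) / 2) _ _ _ s'0 mh h_itv.
  by rewrite ger0_norm.
have I1_le : `|I - 1| <= 16 * M * s ^+ 2 / l.
  exact: (@norm_kint_sub_le _ _ _ 1 _ _ s'0 mh h_le).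
have -> : vfun w s x1 x2 = r * I by [].
have -> : 16 * M * (3 * u / l + 1) / l * s ^+ 2 =
          48 * M * s ^+ 2 / l * (u / l) + 16 * M * s ^+ 2 / l.
  by field; rewrite gt_eqF.
exact: norm_mul_sub1_le r_le I_le I1_le.
Qed.

Theorem lemma2 (R : realType) (omega L U M : R) (w : R -> R) :
  0 < omega ->
  continuous w ->
  0 < L ->
  (forall x, L <= w x <= U) ->
  (forall x, derivable w x 1) ->
  (forall x, derivable (derive1 w) x 1) ->
  (forall x, `|derive1n 2 w x| < M) ->
  exists C : R, 0 < C /\
    forall x1 x2 tau : R, 0 < tau -> tau < 2 * L / (M * omega ^+ 2) ->
      `|vfun w (omega * Num.sqrt tau) x1 x2 - 1| <= C * tau.
Proof.
move=> omega0 _ L0 wLU dw dw' w''M.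
have M0 : 0 < M := le_lt_trans (normr_ge0 _) (w''M 0).
have U0 : 0 < U by case/andP: (wLU 0) => /(lt_le_trans L0)/lt_le_trans; apply.
exists (16 * M * (3 * U / L + 1) / L * omega ^+ 2); split.
  by rewrite !(mulr_gt0, invr_gt0, addr_gt0, exprn_gt0).
move=> x1 x2 tau tau0 _.
have s0 : 0 < omega * Num.sqrt tau by rewrite mulr_gt0 ?sqrtr_gt0.
apply: le_trans (vfun_sub1_le _ _ _ _ _ x1 x2 s0 L0 wLU dw dw' (fun x => ltW (w''M x))) _.
by rewrite exprMn sqr_sqrtr ?(ltW tau0) // mulrA.
Qed.
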